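(* There is a function $\varepsilon(n)\to 0$ as $n\to\infty$ such that for every $n\ge 4$, the number of pairwise non-equivalent quadrilateral embeddings of $L_n$ (equivalently, embeddings of $K_n^3$ in surfaces of Euler genus $\frac{(n-2)(n+3)(n-4)}{12}$) is at most $2^{(\frac14+\varepsilon(n))\,n^3\log_2 n}$.
   Context: $K_n^3$ is the complete $3$-uniform hypergraph on $[n]$; an embedding of $K_n^3$ is a 2-cell embedding of its Levi graph $L_n$, the bipartite graph with vertex set $[n]\sqcup\binom{[n]}{3}$ in which $i$ is adjacent to triple $t$ iff $i\in t$. A quadrilateral embedding is a 2-cell embedding in which every face is bounded by a closed walk of length $4$. The Euler genus of the orientable surface of genus $h$ is $2h$ and of the non-orientable surface with $c$ crosscaps is $c$. Two embeddings $\phi_1,\phi_2$ in a surface $S$ are equivalent if $\phi_2=h\phi_1$ for a homeomorphism $h:S\to S$. *)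

From Stdlib Require Import Reals.
From mathcomp Require Import all_boot all_fingroup.

Set Implicit Arguments.
Unset Strict Implicit.
Unset Printing Implicit Defensive.

Local Open Scope nat_scope.

(* The Levi graph L_n of the complete 3-uniform hypergraph K_n^3.          *)
Definition triple (n : nat) := {A : {set 'I_n} | #|A| == 3}.
Definition LV (n : nat) : finType := ('I_n + triple n)%type.

Definition Ladj (n : nat) : rel (LV n) := fun x y =>
  match x, y with
  | inl i, inr t => i \in val t
  | inr t, inl i => i \in val t
  | _, _ => false
  end.

(* Combinatorial description of 2-cell embeddings (Mohar--Thomassen,      *)
(* "Graphs on Surfaces", Ch. 3): general embedding schemes (rotation      *)
(* system + edge signature), facial walks by face tracing, and            *)
(* equivalence of embeddings = equivalence of schemes under local         *)
(* switches (Thm 3.3.1).  Graph: simple graph on finType V with adjacency *)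
(* relation adj.  Signature value true means "-1" (twisted edge).         *)
Section Embeddings.
Variables (V : finType) (adj : rel V).

Definition scheme : finType :=
  ({ffun V -> {perm V}} * {ffun (V * V) -> bool})%type.

Definition is_scheme (s : scheme) : bool :=
  [&& [forall v, forall w, ~~ adj v w ==> (s.1 v w == w)],
      [forall v, forall w, forall w',
          adj v w && adj v w' ==> fconnect (s.1 v) w w'],
      [forall u, forall v, s.2 (u, v) == s.2 (v, u)] &
      [forall u, forall v, ~~ adj u v ==> ~~ s.2 (u, v)]].

Definition switch (v : V) (s : scheme) : scheme :=
  ([ffun x => if x == v then (s.1 x)^-1%g else s.1 x],
   [ffun e => s.2 e (+) (((e.1 == v) && adj v e.2) || ((e.2 == v) && adj v e.1))]).

Definition switch_rel : rel scheme :=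
  fun s t => [exists v, t == switch v s].

Definition scheme_equiv (s t : scheme) : bool := connect switch_rel s t.

(* face tracing: a state is (u, v, b) = traversing dart u->v with current
   local orientation b (true = reversed). *)
Definition face_step (s : scheme) (x : V * V * bool) : V * V * bool :=
  let: (u, v, b) := x in
  let b' := b (+) s.2 (u, v) in
  (v, (if b' then (s.1 v)^-1%g u else s.1 v u), b').

Definition quadrilateral (s : scheme) : bool :=
  [forall u, forall v, forall b,
     adj u v ==> (fingraph.order (face_step s) (u, v, b) == 4)].

Definition num_quad_embeddings : nat :=
  #|[set [set t | scheme_equiv s t] | s in [set s | is_scheme s && quadrilateral s]]|.

End Embeddings.

(* Read a quadrilateral embedding of L_n through its rotation system.  Two
   consecutive triples t, t' around a point i lie on a common 4-face
   t, i, t', x, so they share a second point x (the pivot) and t' = {i, x, y}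
   for a single new point y (the apex).  The embedding is therefore determined
   by a bounded amount of data per incidence (i, t) -- edge sign, rotation at
   t, position of x in t, and which corner at x closes the face -- plus the
   apex.  The apex is only needed when i < x: the two point corners of a face
   are exchanged by a fixed-point-free involution reversing this comparison,
   and the other half is recovered from the partner corner.  With
   D = 3 C(n,3) <= n^3/2 incidences this leaves at most
   36^D 2^D (n+1)^(D/2) <= 2^(4 n^3) n^(n^3/4) embeddings, i.e.
   eps(n) = 4 / log2 n. *)

From Stdlib Require Import Reals Lra.
From mathcomp Require Import all_boot all_fingroup zify.

Set Implicit Arguments.
Unset Strict Implicit.
Unset Printing Implicit Defensive.

Local Open Scope nat_scope.

Section RotationSystem.
Variables (V : finType) (adj : rel V) (s : scheme V).

Definition rot_link (v a b : V) : Prop := s.1 v a = b \/ s.1 v b = a.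

Lemma face_step_inj : injective (face_step s).
Proof.
move=> [[u1 v1] b1] [[u2 v2] b2] /=; case=> <-.
set c1 := b1 (+) _; set c2 := b2 (+) _ => ew ec.
have eu : u1 = u2 by move: ew; rewrite ec; case: (c2) => /perm_inj.
subst u2; congr (_, _); move: ec; rewrite /c1 /c2.
by case: (s.2 _); rewrite ?addbT ?addbF //; move/negb_inj.
Qed.

(* The facial walk through the dart (u, v) is u, v, s.1 v u, w. *)
Lemma quadrilateral_face u v : quadrilateral adj s -> adj u v ->
  exists w, rot_link (s.1 v u) v w /\ rot_link w (s.1 v u) u.
Proof.
move=> /forallP/(_ u)/forallP/(_ v)/forallP/(_ (s.2 (u, v)))/implyP sq uv.
have := iter_order face_step_inj (u, v, s.2 (u, v)).
rewrite (eqP (sq uv)) /= /face_step addbb /=.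
set w1 := s.1 v u; set w := if s.2 (v, w1) then _ else _.
case=> closes _ _; exists w; split; rewrite /rot_link.
- by rewrite /w; case: (s.2 _); [right; apply: permKV | left].
- by rewrite -closes; case: (_ (+) _); [right; apply: permKV | left].
Qed.

Hypothesis s_scheme : is_scheme adj s.

Lemma rot_nonadj v w : ~~ adj v w -> s.1 v w = w.
Proof. by case/and4P: s_scheme => /forallP/(_ v)/forallP/(_ w)/implyP h _ _ _ /h/eqP. Qed.

Lemma rot_cycle v w w' : adj v w -> adj v w' -> fconnect (s.1 v) w w'.
Proof.
case/and4P: s_scheme => _ /forallP/(_ v)/forallP/(_ w)/forallP/(_ w')/implyP h _ _ vw vw'.
by apply: h; rewrite vw vw'.
Qed.

Lemma sign_sym u v : s.2 (u, v) = s.2 (v, u).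
Proof. by case/and4P: s_scheme => _ _ /forallP/(_ u)/forallP/(_ v)/eqP. Qed.

Lemma sign_nonadj u v : ~~ adj u v -> s.2 (u, v) = false.
Proof. by case/and4P: s_scheme => _ _ _ /forallP/(_ u)/forallP/(_ v)/implyP h /h/negbTE. Qed.

Lemma rot_adj v w : adj v w -> adj v (s.1 v w).
Proof.
move=> vw; apply: contraT => h.
by have /perm_inj e := rot_nonadj h; rewrite e vw in h.
Qed.

Lemma rot_link_adj v a b : adj v a -> rot_link v a b -> adj v b.
Proof.
move=> va [<- | e]; first exact: rot_adj.
by apply: contraT => h; move: va; rewrite -e rot_nonadj // (negbTE h).
Qed.

Lemma rot_neq v w w' : adj v w -> adj v w' -> w != w' -> s.1 v w != w.
Proof.
move=> vw vw' ww'; apply: contra ww' => /eqP fixed.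
by have /iter_findex <- := rot_cycle vw vw'; rewrite iter_fix.
Qed.

Lemma rot2_neq v w w' w'' : adj v w -> adj v w' -> adj v w'' ->
  w != w' -> w != w'' -> w' != w'' -> s.1 v (s.1 v w) != w.
Proof.
move=> vw vw' vw'' ww' ww'' w'w''; apply/eqP => period2.
have orbit2 k : iter k (s.1 v) w \in [:: w; s.1 v w].
  by elim: k => [|k] /=; rewrite !inE ?eqxx // => /orP [] /eqP ->; rewrite ?period2 eqxx ?orbT.
move: (orbit2 (findex (s.1 v) w w')) (orbit2 (findex (s.1 v) w w'')).
rewrite !iter_findex ?rot_cycle // !inE ![_ == w]eq_sym (negbTE ww') (negbTE ww'') /=.
by move=> /eqP e' /eqP e''; rewrite e' e'' eqxx in w'w''.
Qed.

End RotationSystem.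

Section Triples.
Variable n : nat.
Implicit Types (t u : triple n) (i k a : 'I_n).

Lemma card_triple t : #|val t| = 3.
Proof. exact: eqP (valP t). Qed.

Lemma card_tripleD1 t a : a \in val t -> #|val t :\ a| = 2.
Proof. by move=> ta; have := cardsD1 a (val t); rewrite card_triple ta => -[]. Qed.

Lemma other_in_triple t a : a \in val t -> exists2 b, b \in val t & b != a.
Proof.
move/card_tripleD1 => card2.
have /card_gt0P [b] : 0 < #|val t :\ a| by rewrite card2.
by rewrite !inE => /andP [ba tb]; exists b.
Qed.

Lemma eq_triple3 t u i k a : i != k -> i != a -> k != a ->
  i \in val t -> k \in val t -> a \in val t ->
  i \in val u -> k \in val u -> a \in val u -> t = u.
Proof.
move=> ik ia ka ti tk ta ui uk ua.
have setE (v : triple n) : i \in val v -> k \in val v -> a \in val v -> val v = i |: (k |: [set a]).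
  move=> vi vk va; apply/eqP; rewrite eq_sym eqEcard card_triple.
  apply/andP; split; last by rewrite !cardsU1 cards1 !inE negb_or ik ia ka.
  by apply/subsetP => x; rewrite !inE => /orP [/eqP -> | /orP [] /eqP ->].
by apply: val_inj; rewrite (setE t ti tk ta) (setE u ui uk ua).
Qed.

Lemma triple_swap t a k : a \in val t -> k \notin val t ->
  {u : triple n | val u = val t :\ a :|: [set k]}.
Proof.
move=> ta tk; have card3 : #|val t :\ a :|: [set k]| == 3.
  by rewrite setUC cardsU1 !inE negb_and tk orbT card_tripleD1.
by exists (exist (fun A : {set 'I_n} => #|A| == 3) _ card3).
Qed.

Lemma exists_other_triple t i : 4 <= n -> i \in val t ->
  exists2 u : triple n, i \in val u & u != t.
Proof.
move=> n_ge4 ti.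
have [k tk] : exists k, k \notin val t.
  have := cardsC (val t); rewrite card_ord card_triple => cardC.
  have /card_gt0P [k] : 0 < #|~: val t| by lia.
  by rewrite inE; exists k.
have [a ta ai] := other_in_triple ti.
have [u uE] := triple_swap ta tk.
exists u; first by rewrite uE !inE eq_sym ai ti.
by apply: contraNneq tk => <-; rewrite uE !inE eqxx orbT.
Qed.

Definition triple_index t k : 'I_3 := inord (index k (enum (val t))).

Lemma triple_index_inj t : {in val t &, injective (triple_index t)}.
Proof.
have size3 : size (enum (val t)) = 3 by rewrite -cardE card_triple.
have indexE k : k \in val t -> triple_index t k = index k (enum (val t)) :> nat.
  move=> tk; rewrite inordK // -[X in _ < X]size3.
  by rewrite index_mem mem_enum.
move=> k1 k2 tk1 tk2 /(congr1 (@nat_of_ord 3)); rewrite !indexE // => e.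
by rewrite -(nth_index k1 (_ : k1 \in enum (val t))) ?mem_enum // e nth_index ?mem_enum.
Qed.

End Triples.

Definition vpoint n (i : 'I_n) : LV n := inl i.
Definition vtriple n (t : triple n) : LV n := inr t.

Lemma vpoint_eq n (i k : 'I_n) : (vpoint i == vpoint k) = (i == k).
Proof. by []. Qed.

Lemma vtriple_eq n (t u : triple n) : (vtriple t == vtriple u) = (t == u).
Proof. by []. Qed.

Definition incidence n : {set 'I_n * triple n} := [set p : 'I_n * triple n | p.1 \in val p.2].

Lemma in_incidence n (p : 'I_n * triple n) : (p \in incidence n) = (p.1 \in val p.2).
Proof. by rewrite inE. Qed.

Section LeviScheme.
Variables (n : nat) (s : scheme (LV n)).
Hypotheses (n_ge4 : 4 <= n) (s_scheme : is_scheme (@Ladj n) s).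
Hypothesis s_quad : quadrilateral (@Ladj n) s.
Implicit Types (t u : triple n) (i k x : 'I_n).

Definition next_triple i t : triple n :=
  if s.1 (vpoint i) (vtriple t) is inr u then u else t.

Definition next_point t k : 'I_n :=
  if s.1 (vtriple t) (vpoint k) is inl k' then k' else k.

Lemma rot_vpoint i t : i \in val t ->
  s.1 (vpoint i) (vtriple t) = vtriple (next_triple i t).
Proof.
move=> ti; have := rot_adj s_scheme (ti : Ladj (vpoint i) (vtriple t)).
by rewrite /next_triple; case: (s.1 _ _).
Qed.

Lemma mem_next_triple i t : i \in val t -> i \in val (next_triple i t).
Proof.
by move=> ti; have := rot_adj s_scheme (ti : Ladj (vpoint i) (vtriple t)); rewrite rot_vpoint.
Qed.

Lemma rot_vtriple t k : k \in val t ->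
  s.1 (vtriple t) (vpoint k) = vpoint (next_point t k).
Proof.
move=> tk; have := rot_adj s_scheme (tk : Ladj (vtriple t) (vpoint k)).
by rewrite /next_point; case: (s.1 _ _).
Qed.

Lemma mem_next_point t k : k \in val t -> next_point t k \in val t.
Proof.
by move=> tk; have := rot_adj s_scheme (tk : Ladj (vtriple t) (vpoint k)); rewrite rot_vtriple.
Qed.

Lemma next_point_neq t k : k \in val t -> next_point t k != k.
Proof.
move=> tk; have [a ta ak] := other_in_triple tk.
have := rot_neq s_scheme (tk : Ladj (vtriple t) (vpoint k)) (ta : Ladj (vtriple t) (vpoint a)).
by rewrite rot_vtriple // !vpoint_eq eq_sym; apply.
Qed.

Lemma next_triple_neq i t : i \in val t -> next_triple i t != t.
Proof.
move=> ti; have [u ui ut] := exists_other_triple n_ge4 ti.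
have := rot_neq s_scheme (ti : Ladj (vpoint i) (vtriple t)) (ui : Ladj (vpoint i) (vtriple u)).
by rewrite rot_vpoint // !vtriple_eq eq_sym; apply.
Qed.

Lemma next_triple_inj i t1 t2 : i \in val t1 -> i \in val t2 ->
  next_triple i t1 = next_triple i t2 -> t1 = t2.
Proof.
move=> t1i t2i e.
have : s.1 (vpoint i) (vtriple t1) = s.1 (vpoint i) (vtriple t2) by rewrite !rot_vpoint // e.
by move/perm_inj => -[].
Qed.

Lemma exists_pivot i t : i \in val t ->
  exists2 x, x != i & [/\ x \in val t, x \in val (next_triple i t) &
    next_triple x (next_triple i t) = t \/ next_triple x t = next_triple i t].
Proof.
move=> ti; have t'i := mem_next_triple ti.
have [w [link1 link2]] := quadrilateral_face s_quad (ti : Ladj (vtriple t) (vpoint i)).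
rewrite rot_vpoint // in link1 link2.
have := rot_link_adj s_scheme (t'i : Ladj (vtriple _) (vpoint i)) link1.
case: w link1 link2 => // x link1 link2 t'x.
have tx : x \in val t := rot_link_adj s_scheme (t'x : Ladj (vpoint x) (vtriple _)) link2.
exists x; last first.
  by split=> //; case: link2; rewrite !rot_vpoint // => -[]; [left | right].
apply/eqP => xi; subst x.
have : s.1 (vtriple (next_triple i t)) (vpoint i) = vpoint i by case: link1.
by rewrite rot_vtriple // => -[] /eqP; apply/negP; apply: next_point_neq.
Qed.

Definition pivot i t : 'I_n :=
  odflt i [pick x | [&& x != i, x \in val t & x \in val (next_triple i t)]].

Lemma pivot_unique i t x : i \in val t ->
  x != i -> x \in val t -> x \in val (next_triple i t) -> pivot i t = x.
Proof.
move=> ti xi tx t'x; rewrite /pivot; case: pickP => [y /and3P [yi ty t'y] | /(_ x)].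
  apply/eqP; apply: contraT => yx; case/eqP: (next_triple_neq ti).
  apply: (@eq_triple3 _ _ _ i x y); rewrite 1?eq_sym //.
  exact: mem_next_triple.
by rewrite xi tx t'x.
Qed.

Lemma pivotP i t : i \in val t ->
  [/\ pivot i t != i, pivot i t \in val t, pivot i t \in val (next_triple i t) &
      next_triple (pivot i t) (next_triple i t) = t \/
      next_triple (pivot i t) t = next_triple i t].
Proof.
by move=> ti; have [x xi [tx t'x link]] := exists_pivot ti; rewrite (pivot_unique ti xi tx t'x).
Qed.

Definition apex i t : 'I_n :=
  odflt i [pick y | (y \in val (next_triple i t)) && (y \notin val t)].

Lemma apexP i t : i \in val t ->
  apex i t \in val (next_triple i t) /\ apex i t \notin val t.
Proof.
move=> ti; rewrite /apex; case: pickP => [y /andP [] // | none].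
case/eqP: (next_triple_neq ti); apply: val_inj; apply/eqP.
rewrite eqEcard !card_triple leqnn andbT; apply/subsetP => y t'y.
by move: (none y); rewrite t'y => /negbFE.
Qed.

Lemma next_triple2_neq i t : i \in val t -> next_triple i (next_triple i t) != t.
Proof.
move=> ti; have t'i := mem_next_triple ti.
have [xi tx t'x _] := pivotP ti; have [t'y ty] := apexP ti.
have [u uE] := triple_swap tx ty.
have ui : i \in val u by rewrite uE !inE eq_sym xi ti.
have uy : apex i t \in val u by rewrite uE !inE eqxx orbT.
have ux : pivot i t \notin val u by rewrite uE !inE eqxx /=; apply: contraNneq ty => <-.
have := rot2_neq s_scheme (ti : Ladj (vpoint i) (vtriple t)) (t'i : Ladj (vpoint i) (vtriple _))
  (ui : Ladj (vpoint i) (vtriple u)).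
rewrite !rot_vpoint // !vtriple_eq; apply.
- by rewrite eq_sym next_triple_neq.
- by apply: contraNneq ty => tu; rewrite [in val t]tu.
- by apply: contraNneq ux => <-.
Qed.

(* (i, t) stands for the corner at i from t to next_triple i t; its partner is
   the corner at the pivot on the same face. *)
Definition partner (p : 'I_n * triple n) : 'I_n * triple n :=
  let: (i, t) := p in
  (pivot i t, if next_triple (pivot i t) t == next_triple i t then t else next_triple i t).

Lemma partner_spec p : p \in incidence n ->
  [/\ partner p \in incidence n, pivot (partner p).1 (partner p).2 = p.1 &
      partner (partner p) = p].
Proof.
case: p => i t pi; have ti : i \in val t by rewrite in_incidence in pi.
have t'i := mem_next_triple ti.
have [xi tx t'x link] := pivotP ti; rewrite /partner /=.
case: ifPn => [/eqP same | differ].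
  have pivot_xt : pivot (pivot i t) t = i by apply: pivot_unique; rewrite // ?same // eq_sym.
  by rewrite in_incidence pivot_xt -same eqxx.
have {link} back : next_triple (pivot i t) (next_triple i t) = t.
  by case: link => // same; rewrite same eqxx in differ.
have pivot_xt' : pivot (pivot i t) (next_triple i t) = i.
  by apply: pivot_unique; rewrite // ?back // eq_sym.
by rewrite in_incidence pivot_xt' back ifN_eq // next_triple2_neq.
Qed.

Lemma partnerK : {in incidence n, involutive partner}.
Proof. by move=> p /partner_spec []. Qed.

Definition ascending : {set 'I_n * triple n} :=
  [set p in incidence n | p.1 < pivot p.1 p.2].

Lemma in_ascending p : (p \in ascending) = (p.1 \in val p.2) && (p.1 < pivot p.1 p.2).
Proof. by rewrite inE in_incidence. Qed.

Lemma card_ascending : 2 * #|ascending| <= #|incidence n|.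
Proof.
have asc_sub : ascending \subset incidence n.
  by apply/subsetP => p; rewrite in_ascending in_incidence => /andP [].
have swap : partner @: ascending \subset incidence n :\: ascending.
  apply/subsetP => _ /imsetP [p + ->].
  rewrite in_ascending -in_incidence => /andP [/partner_spec [partner_in pivot_partner _] lt].
  rewrite inE in_ascending -in_incidence partner_in pivot_partner /= -leqNgt andbT.
  by case: p lt {partner_in pivot_partner} => i t /ltnW.
have := subset_leq_card swap.
rewrite cardsD (setIidPr asc_sub) card_in_imset.
  by rewrite leq_subRL ?subset_leq_card // addnn mul2n.
by apply: (sub_in2 (subsetP asc_sub)); apply: can_in_inj partnerK.
Qed.

Definition local_code : {ffun 'I_n * triple n -> bool * 'I_3 * 'I_3 * bool} :=
  [ffun p => if p \in incidence n then
     (s.2 (vpoint p.1, vtriple p.2), triple_index p.2 (next_point p.2 p.1),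
      triple_index p.2 (pivot p.1 p.2), next_triple (pivot p.1 p.2) p.2 == next_triple p.1 p.2)
   else (false, ord0, ord0, false)].

Definition apex_code : {ffun 'I_n * triple n -> option 'I_n} :=
  [ffun p => if p \in ascending then Some (apex p.1 p.2) else None].

End LeviScheme.

Section Decoding.
Variables (n : nat) (s1 s2 : scheme (LV n)).
Hypothesis n_ge4 : 4 <= n.
Hypotheses (s1_scheme : is_scheme (@Ladj n) s1) (s2_scheme : is_scheme (@Ladj n) s2).
Hypotheses (s1_quad : quadrilateral (@Ladj n) s1) (s2_quad : quadrilateral (@Ladj n) s2).
Hypothesis same_local_code : local_code s1 = local_code s2.
Hypothesis same_apex_code : apex_code s1 = apex_code s2.
Implicit Types (t u : triple n) (i k : 'I_n).

Lemma local_code_eq i t : i \in val t ->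
  [/\ s1.2 (vpoint i, vtriple t) = s2.2 (vpoint i, vtriple t),
      triple_index t (next_point s1 t i) = triple_index t (next_point s2 t i),
      triple_index t (pivot s1 i t) = triple_index t (pivot s2 i t) &
      (next_triple s1 (pivot s1 i t) t == next_triple s1 i t) =
      (next_triple s2 (pivot s2 i t) t == next_triple s2 i t)].
Proof.
move=> ti; have /ffunP/(_ (i, t)) := same_local_code.
by rewrite !ffunE in_incidence ti => -[].
Qed.

Lemma pivot_eq i t : i \in val t -> pivot s1 i t = pivot s2 i t.
Proof.
move=> ti; have [_ _ index_eq _] := local_code_eq ti.
by apply: triple_index_inj index_eq; [case: (pivotP n_ge4 s1_scheme s1_quad ti)
                                    | case: (pivotP n_ge4 s2_scheme s2_quad ti)].
Qed.

Lemma next_point_eq t k : k \in val t -> next_point s1 t k = next_point s2 t k.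
Proof.
move=> tk; have [_ index_eq _ _] := local_code_eq tk.
by apply: triple_index_inj index_eq; apply: mem_next_point.
Qed.

Lemma next_triple_eq_ascending i t : i \in val t -> i < pivot s1 i t ->
  next_triple s1 i t = next_triple s2 i t.
Proof.
move=> ti lt.
have asc1 : (i, t) \in ascending s1 by rewrite in_ascending ti.
have asc2 : (i, t) \in ascending s2 by rewrite in_ascending ti -pivot_eq.
have /ffunP/(_ (i, t)) := same_apex_code; rewrite !ffunE asc1 asc2 => -[apex_eq].
have [xi1 tx1 t'x1 _] := pivotP n_ge4 s1_scheme s1_quad ti.
have [_ _ t'x2 _] := pivotP n_ge4 s2_scheme s2_quad ti.
have [t'y1 ty1] := apexP n_ge4 s1_scheme ti; have [t'y2 _] := apexP n_ge4 s2_scheme ti.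
rewrite -pivot_eq // in t'x2; rewrite -apex_eq in t'y2.
apply: (@eq_triple3 _ _ _ i (pivot s1 i t) (apex s1 i t)) => //;
  try exact: mem_next_triple.
- by rewrite eq_sym.
- by apply: contraNneq ty1 => <-.
- by apply: contraNneq ty1 => <-.
Qed.

Lemma next_triple_eq i t : i \in val t -> next_triple s1 i t = next_triple s2 i t.
Proof.
move=> ti; have [_ _ _ bit_eq] := local_code_eq ti.
have [xi tx t'x link1] := pivotP n_ge4 s1_scheme s1_quad ti.
have [_ _ t'x2 link2] := pivotP n_ge4 s2_scheme s2_quad ti.
rewrite -pivot_eq // in bit_eq t'x2 link2.
set x := pivot s1 i t in xi tx t'x link1 bit_eq t'x2 link2.
case: (ltngtP i x) => [| x_lt_i |]; first exact: next_triple_eq_ascending; last first.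
  by move=> /val_inj ix; rewrite ix eqxx in xi.
have asc_eq u : x \in val u -> i \in val u -> i \in val (next_triple s1 x u) ->
    next_triple s1 x u = next_triple s2 x u.
  move=> ux ui u'i; apply: next_triple_eq_ascending => //.
  by rewrite (pivot_unique n_ge4 s1_scheme ux _ ui u'i) // eq_sym.
have [same1 | differ1] := eqVneq (next_triple s1 x t) (next_triple s1 i t).
  move: bit_eq; rewrite same1 eqxx => /esym/eqP same2.
  by rewrite -same1 -same2 asc_eq // same1 mem_next_triple.
move: bit_eq; rewrite (negbTE differ1) => /esym/negbT differ2.
have back1 : next_triple s1 x (next_triple s1 i t) = t.
  by case: link1 => // same; rewrite same eqxx in differ1.
have back2 : next_triple s2 x (next_triple s2 i t) = t.
  by case: link2 => // same; rewrite same eqxx in differ2.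
apply: (next_triple_inj s2_scheme t'x t'x2).
by rewrite back2 -asc_eq ?back1 // mem_next_triple.
Qed.

Lemma sign_incidence_eq i t :
  s1.2 (vpoint i, vtriple t) = s2.2 (vpoint i, vtriple t).
Proof.
have [ti | not_ti] := boolP (i \in val t); first by case: (local_code_eq ti).
have {}not_ti : ~~ Ladj (vpoint i) (vtriple t) by [].
by rewrite (sign_nonadj s1_scheme not_ti) (sign_nonadj s2_scheme not_ti).
Qed.

Lemma sign_eq : s1.2 = s2.2.
Proof.
apply/ffunP => -[[i | t] [k | u]].
- by rewrite (sign_nonadj s1_scheme) ?(sign_nonadj s2_scheme).
- exact: sign_incidence_eq.
- by rewrite (sign_sym s1_scheme) (sign_sym s2_scheme) sign_incidence_eq.
- by rewrite (sign_nonadj s1_scheme) ?(sign_nonadj s2_scheme).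
Qed.

Lemma rot_eq : s1.1 = s2.1.
Proof.
apply/ffunP => v; apply/permP => w.
case: v w => [i | t] [k | u].
- by rewrite (rot_nonadj s1_scheme) ?(rot_nonadj s2_scheme).
- have [iu | not_iu] := boolP (i \in val u).
    by rewrite (rot_vpoint s1_scheme iu) (rot_vpoint s2_scheme iu) next_triple_eq.
  have {}not_iu : ~~ Ladj (vpoint i) (vtriple u) by [].
  by rewrite (rot_nonadj s1_scheme not_iu) (rot_nonadj s2_scheme not_iu).
- have [tk | not_tk] := boolP (k \in val t).
    by rewrite (rot_vtriple s1_scheme tk) (rot_vtriple s2_scheme tk) next_point_eq.
  have {}not_tk : ~~ Ladj (vtriple t) (vpoint k) by [].
  by rewrite (rot_nonadj s1_scheme not_tk) (rot_nonadj s2_scheme not_tk).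
- by rewrite (rot_nonadj s1_scheme) ?(rot_nonadj s2_scheme).
Qed.

Lemma scheme_eq_of_codes : s1 = s2.
Proof. by rewrite (surjective_pairing s1) (surjective_pairing s2) rot_eq sign_eq. Qed.

End Decoding.

Lemma card_triples n : #|{: triple n}| = 'C(n, 3).
Proof. by rewrite card_sig -[n in 'C(n, 3)]card_ord -card_draws cardsE. Qed.

Lemma card_incidence n : #|incidence n| = 3 * 'C(n, 3).
Proof.
rewrite -sum1_card (eq_bigl (fun p : 'I_n * triple n => p.1 \in val p.2)); last first.
  by move=> p; rewrite in_incidence.
rewrite -(pair_big_dep xpredT (fun i (t : triple n) => i \in val t) (fun _ _ => 1)) /=.
rewrite (exchange_big_dep xpredT) //= (eq_bigr (fun _ => 3)).
  by rewrite sum_nat_const mulnC card_triples.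
by move=> t _; rewrite sum1_card card_triple.
Qed.

Lemma leq_card_bigcup (I T : finType) (P : pred I) (F : I -> {set T}) :
  #|\bigcup_(i | P i) F i| <= \sum_(i | P i) #|F i|.
Proof.
elim/big_ind2: _ => // [|a A b B leA leB]; first by rewrite cards0.
by rewrite (leq_trans (leq_card_setU A B)) ?leq_add.
Qed.

Definition local_codes n := pffun_on (false, ord0, ord0, false) (incidence n)
  [set: bool * 'I_3 * 'I_3 * bool].

Definition sparse_codes n : {set {ffun 'I_n * triple n -> option 'I_n}} :=
  \bigcup_(C in powerset (incidence n) | 2 * #|C| <= #|incidence n|)
     [set f | f \in pffun_on None C [set: option 'I_n]].

Lemma card_local_codes n : #|local_codes n| = 36 ^ #|incidence n|.
Proof. by rewrite card_pffun_on cardsT !card_prod card_bool card_ord. Qed.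

Lemma card_sparse_codes n :
  #|sparse_codes n| <= 2 ^ #|incidence n| * n.+1 ^ (#|incidence n|)./2.
Proof.
apply: leq_trans; first exact: leq_card_bigcup.
rewrite -card_powerset -sum_nat_const big_mkcondr /=.
apply: leq_sum => C _; case: ifP => // small.
rewrite cardsE card_pffun_on cardsT card_option card_ord leq_pexp2l //.
by rewrite geq_half_double -mul2n.
Qed.

Lemma local_code_in n (s : scheme (LV n)) : local_code s \in local_codes n.
Proof.
apply/pffun_onP; split=> [|p _]; last by rewrite inE.
apply/subsetP => p; rewrite inE ffunE.
by case: ifP => [pD _ | _]; rewrite ?eqxx.
Qed.

Lemma apex_code_in n (s : scheme (LV n)) : 4 <= n -> is_scheme (@Ladj n) s ->
  quadrilateral (@Ladj n) s -> apex_code s \in sparse_codes n.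
Proof.
move=> n_ge4 s_scheme s_quad; apply/bigcupP; exists (ascending s).
  rewrite powersetE card_ascending // andbT.
  by apply/subsetP => p; rewrite in_ascending in_incidence => /andP [].
rewrite inE; apply/pffun_onP; split=> [|p _]; last by rewrite inE.
apply/subsetP => p; rewrite inE ffunE.
by case: ifP => [pA _ | _]; rewrite ?eqxx.
Qed.

Lemma num_quad_embeddings_le n : 4 <= n ->
  num_quad_embeddings (@Ladj n) <=
    36 ^ #|incidence n| * (2 ^ #|incidence n| * n.+1 ^ (#|incidence n|)./2).
Proof.
move=> n_ge4; apply: leq_trans (leq_imset_card _ _) _.
set Q := [set s | _]; pose code (s : scheme (LV n)) := (local_code s, apex_code s).
have code_inj : {in Q &, injective code}.
  move=> s1 s2; rewrite !inE => /andP [sch1 quad1] /andP [sch2 quad2] [].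
  exact: scheme_eq_of_codes.
rewrite -(card_in_imset code_inj).
apply: (@leq_trans #|setX [set f in local_codes n] (sparse_codes n)|).
  apply/subset_leq_card/subsetP => _ /imsetP [s + ->]; rewrite inE => /andP [sch quad].
  by rewrite in_setX inE local_code_in apex_code_in.
by rewrite cardsX cardsE card_local_codes leq_mul2l card_sparse_codes orbT.
Qed.

Lemma code_count_le n D : 0 < n -> 2 * D <= n ^ 3 ->
  36 ^ D * (2 ^ D * n.+1 ^ D./2) <= 2 ^ (4 * n ^ 3) * n ^ (n ^ 3 %/ 4).
Proof.
move=> n_gt0 D_le.
have pow_mono a b e : a <= b -> a ^ e <= b ^ e.
  by move=> ab; elim: e => // e IH; rewrite !expnS leq_mul.
have half_le : (D./2).*2 <= D by rewrite -geq_half_double.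
apply: (@leq_trans (2 ^ (6 * D) * (2 ^ D * (2 ^ D * n ^ (n ^ 3 %/ 4))))).
  rewrite expnM leq_mul ?pow_mono // leq_mul //.
  apply: leq_trans (pow_mono _ _ _ (_ : n.+1 <= 2 * n)) _; first lia.
  by rewrite expnMn leq_mul ?leq_pexp2l //; lia.
by rewrite !mulnA -!expnD leq_mul ?leq_pexp2l //; lia.
Qed.

Lemma card_incidence_le n : 2 * #|incidence n| <= n ^ 3.
Proof.
rewrite card_incidence mulnA mulnC -[2 * 3]/(3`!) bin_ffact.
by rewrite !ffactnS ffactn0 muln1; nia.
Qed.

Local Open Scope R_scope.

Lemma INR_expn m k : INR (m ^ k) = INR m ^ k.
Proof. by elim: k => [|k IH]; rewrite ?expnS -?multE ?mult_INR ?IH. Qed.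

Definition log_error (n : nat) : R := 4 * ln 2 / ln (INR n).

Lemma cv_infty_ln_div c : 0 < c -> cv_infty (fun n => ln (INR n) / c).
Proof.
move=> c_gt0 M; have [N N_gt] := INR_unbounded (exp (M * c)).
exists N => k /le_INR k_ge.
have ln_gt : M * c < ln (INR k).
  rewrite -[X in X < _]ln_exp; apply: ln_increasing; [exact: exp_pos | lra].
apply: (Rmult_lt_reg_r c) => //.
by have -> : ln (INR k) / c * c = ln (INR k) by field; lra.
Qed.

Lemma log_error_cv : Un_cv log_error 0.
Proof.
have ln2_gt0 : 0 < ln 2 by rewrite -ln_1; apply: ln_increasing; lra.
have /cv_infty_ln_div/cv_infty_cv_0 cv : 0 < 4 * ln 2 by lra.
move=> e /(cv e) [N close]; exists N => k /close.
by rewrite Rinv_div.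
Qed.

Lemma Rpower_log_error n : (2 <= n)%N ->
  Rpower 2 ((1/4 + log_error n) * (INR n ^ 3) * (ln (INR n) / ln 2)) =
  Rpower 2 (INR (4 * n ^ 3)) * Rpower (INR n) (INR n ^ 3 / 4).
Proof.
move=> n_ge2; have ln2_gt0 : 0 < ln 2 by rewrite -ln_1; apply: ln_increasing; lra.
have lnn_gt0 : 0 < ln (INR n).
  rewrite -ln_1; apply: ln_increasing; first lra.
  by apply: (Rlt_le_trans _ 2); [lra | apply: (le_INR 2); apply/leP].
rewrite /Rpower -exp_plus /log_error -multE mult_INR INR_expn; congr exp.
have -> : INR 4 = 4 by rewrite INR_IZR_INZ.
by field; split; lra.
Qed.

Lemma INR_le_Rpower_log_error n : (2 <= n)%N ->
  INR (2 ^ (4 * n ^ 3) * n ^ (n ^ 3 %/ 4)) <=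
  Rpower 2 ((1/4 + log_error n) * (INR n ^ 3) * (ln (INR n) / ln 2)).
Proof.
move=> n_ge2; have N_ge2 : 2 <= INR n by apply: (le_INR 2); apply/leP.
have INR_Rpower b k : 0 < INR b -> INR (b ^ k) = Rpower (INR b) (INR k).
  by move=> b_gt0; rewrite INR_expn Rpower_pow.
have h_le : 4 * INR (n ^ 3 %/ 4) <= INR n ^ 3.
  have /leP/le_INR : (4 * (n ^ 3 %/ 4) <= n ^ 3)%N by rewrite mulnC leq_divM.
  by rewrite -multE mult_INR INR_expn (INR_IZR_INZ 4).
have INR2 : INR 2 = 2 by rewrite /=; lra.
rewrite Rpower_log_error // -multE mult_INR !INR_Rpower; try lra.
rewrite INR2.
apply: Rmult_le_compat_l; first exact/Rlt_le/exp_pos.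
by apply: Rle_Rpower; lra.
Qed.

Theorem lemma4p1 :
  exists eps : nat -> R,
    Un_cv eps 0 /\
    forall n : nat, (4 <= n)%N ->
      INR (num_quad_embeddings (@Ladj n))
        <= Rpower 2 ((1/4 + eps n) * (INR n ^ 3) * (ln (INR n) / ln 2)).
Proof.
exists log_error; split; first exact: log_error_cv.
move=> n n_ge4; apply: Rle_trans (INR_le_Rpower_log_error _); last by apply: leq_trans n_ge4.
apply/le_INR/leP; apply: leq_trans (num_quad_embeddings_le n_ge4) _.
by apply: code_count_le (card_incidence_le n); apply: leq_trans n_ge4.
Qed.
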